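(* Let $\kappa$ be a probability density on $\mathbb{R}^d$ with $|h_2(\kappa)|\le A_{\kappa,2}$, let $\theta\in(0,1)$, let $Z_1,\dots,Z_n\in\mathbb{R}^d$, and let $(a_1,\dots,a_n)$ be a probability vector with $a_i\ge\epsilon>0$ for all $i\in[n]$. Let $\tilde Z_n$ have density $\mu_{\tilde Z_n}=\frac1{\theta^d}\sum_{i=1}^n a_i\kappa_{\theta,Z_i}$, where $\kappa_{\theta,z}(x)=\kappa\left(\frac{x-z}{\theta}\right)$. Then \[ |h_2(\tilde Z_n)|\le A_{\kappa,2}+d\log\tfrac1\theta+2\log\tfrac1\epsilon. \]
   Context: $h_2(f)=-\log\int f^2$ is the second-order differential Rényi entropy; $h_2(\tilde Z_n)$ means $h_2(\mu_{\tilde Z_n})$. *)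

(* R^d is modelled as d.-tuple R with its canonical
   (product / Borel) sigma-algebra; the Lebesgue integral on R^d of a
   nonnegative function is defined as the iterated one-dimensional Lebesgue
   integral (equal to the d-dimensional Lebesgue integral by Tonelli). *)
From HB Require Import structures.
From mathcomp Require Import all_boot all_order all_algebra.
From mathcomp Require Import all_classical all_reals all_analysis.
Set Implicit Arguments. Unset Strict Implicit. Unset Printing Implicit Defensive.
Import Order.TTheory GRing.Theory Num.Theory.
Local Open Scope ring_scope.

Section Defs.
Variable R : realType.

Fixpoint iint (d : nat) : (d.-tuple R -> \bar R) -> \bar R :=
  match d return (d.-tuple R -> \bar R) -> \bar R with
  | 0 => fun f => f [tuple]
  | d'.+1 => fun f =>
      (\int[@lebesgue_measure R]_(x in [set: R])
          iint (fun t : d'.-tuple R => f [tuple of x :: t]))%E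
  end.

Definition is_density (d : nat) (f : d.-tuple R -> R) : Prop :=
  measurable_fun [set: d.-tuple R] f /\ (forall x, 0 <= f x) /\
  iint (fun x => (f x)%:E) = 1%E.

Definition h2 (d : nat) (f : d.-tuple R -> R) : \bar R :=
  (- lne (iint (fun x => (f x ^+ 2)%:E)))%E.

Definition kshift (d : nat) (kappa : d.-tuple R -> R) (theta : R)
  (z : d.-tuple R) : d.-tuple R -> R :=
  fun x => kappa [tuple (tnth x i - tnth z i) / theta | i < d].

Definition mix_density (d n : nat) (kappa : d.-tuple R -> R) (theta : R)
  (a : 'I_n -> R) (Z : 'I_n -> d.-tuple R) : d.-tuple R -> R :=
  fun x => theta ^- d * \sum_(i < n) a i * kshift kappa theta (Z i) x.

End Defs.

(* Write mu for the mixture density and K for the integral of kappa^2.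
   The change of variables x |-> (x - z)/theta gives each rescaled bump
   kappa_{theta,z} the squared integral theta^d K.  Jensen's inequality for
   the square and the weights a_i gives mu^2 <= theta^(-2d) sum_i a_i
   kappa_{theta,Z_i}^2, hence int mu^2 <= theta^(-d) K; dropping all but one
   (nonnegative) term of the mixture and using a_j >= eps gives
   int mu^2 >= theta^(-d) eps^2 K.  Taking logarithms, h_2(mu) lies between
   h_2(kappa) - d log(1/theta) and
   h_2(kappa) - d log(1/theta) + 2 log(1/eps). *)

From HB Require Import structures.
From mathcomp Require Import all_boot all_order all_algebra.
From mathcomp Require Import all_classical all_reals all_analysis.
From mathcomp Require Import measurable_realfun.
From mathcomp Require Import lra ring.
Import Order.TTheory GRing.Theory Num.Theory.
Set Implicit Arguments. Unset Strict Implicit. Unset Printing Implicit Defensive.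
Local Open Scope ring_scope.

Section iterated_integral.
Variable R : realType.
Local Open Scope ereal_scope.

Lemma iint_ge0 (d : nat) (f : d.-tuple R -> \bar R) :
  (forall x, 0 <= f x) -> 0 <= iint f.
Proof.
elim: d f => [|d IH] f f0 /=; first exact: f0.
by apply: integral_ge0 => x _; apply: IH.
Qed.

Lemma measurable_iint_section (d : nat) : forall (dX : measure_display)
    (X : measurableType dX) (g : X * d.-tuple R -> \bar R),
  measurable_fun setT g -> (forall p, 0 <= g p) ->
  measurable_fun setT (fun x => iint (fun t => g (x, t))).
Proof.
elim: d => [|d IH] dX X g mg g0 /=.
  exact: (measurableT_comp mg (measurable_fun_pair _ _)).
pose g' (p : (X * R) * d.-tuple R) := g (p.1.1, [tuple of p.1.2 :: p.2]).
have mg' : measurable_fun setT g'.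
  apply: (measurableT_comp mg); apply: measurable_fun_pair.
    exact: (measurableT_comp measurable_fst measurable_fst).
  apply: measurable_cons; last exact: measurable_snd.
  exact: (measurableT_comp measurable_snd measurable_fst).
apply: (measurable_fun_fubini_tonelli_F (m2 := @lebesgue_measure R) _
  (IH _ _ g' mg' (fun p => g0 _))).
by move=> q; apply: iint_ge0 => t; exact: g0.
Qed.

Lemma measurable_fun_cons_section (d : nat) (f : d.+1.-tuple R -> \bar R)
    (y : R) :
  measurable_fun setT f ->
  measurable_fun setT (fun t : d.-tuple R => f [tuple of y :: t]).
Proof.
move=> mf; apply: (measurableT_comp mf).
by apply: measurable_cons; [exact: measurable_cst | exact: measurable_id].
Qed.

Lemma measurable_iint_cons (d : nat) (f : d.+1.-tuple R -> \bar R) :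
  measurable_fun setT f -> (forall x, 0 <= f x) ->
  @measurable_fun _ _ (measurableTypeR R) _ setT
    (fun y : R => iint (fun t : d.-tuple R => f [tuple of y :: t])).
Proof.
move=> mf f0.
apply: (measurable_iint_section (g := fun p : R * d.-tuple R =>
  f [tuple of p.1 :: p.2])) => //.
apply: (measurableT_comp mf).
by apply: measurable_cons; [exact: measurable_fst | exact: measurable_snd].
Qed.

Lemma iint_sum (d : nat) (I : Type) (s : seq I)
    (F : I -> d.-tuple R -> \bar R) :
  (forall i, measurable_fun setT (F i)) -> (forall i x, 0 <= F i x) ->
  iint (fun x => \sum_(i <- s) F i x) = \sum_(i <- s) iint (F i).
Proof.
elim: d F => [|d IH] F mF F0 //=.
rewrite -ge0_integral_sum //.
- apply: eq_integral => y _; apply: IH => // i.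
  exact: measurable_fun_cons_section.
- by move=> i; apply: measurable_iint_cons.
- by move=> i y _; apply: iint_ge0.
Qed.

Lemma iintZl (d : nat) (k : R) (f : d.-tuple R -> \bar R) : (0 <= k)%R ->
  measurable_fun setT f -> (forall x, 0 <= f x) ->
  iint (fun x => k%:E * f x) = k%:E * iint f.
Proof.
elim: d f => [|d IH] f k0 mf f0 //=.
rewrite -ge0_integralZl //; last 2 first.
- exact: measurable_iint_cons.
- by move=> y _; apply: iint_ge0.
apply: eq_integral => y _; apply: IH => //.
exact: measurable_fun_cons_section.
Qed.

Lemma ge0_le_iint (d : nat) (f g : d.-tuple R -> \bar R) :
  measurable_fun setT f -> measurable_fun setT g ->
  (forall x, 0 <= f x) -> (forall x, f x <= g x) -> iint f <= iint g.
Proof.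
elim: d f g => [|d IH] f g mf mg f0 fg //=.
have g0 x : 0 <= g x := le_trans (f0 x) (fg x).
apply: ge0_le_integral => //.
- by move=> y _; apply: iint_ge0.
- exact: measurable_iint_cons.
- exact: measurable_iint_cons.
move=> y _; apply: IH => //; exact: measurable_fun_cons_section.
Qed.

End iterated_integral.

Section affine_change_of_variables.
Variable R : realType.
Variables (z t : R).
Hypothesis t_gt0 : 0 < t.
Local Open Scope classical_set_scope.

Lemma measurable_affine : measurable_fun setT (fun y : R => (y - z) / t).
Proof.
apply: measurable_funM; last exact: measurable_cst.
by apply: measurable_funD; [exact: measurable_id | exact: measurable_cst].
Qed.

Lemma affine_preimage_itvoc (a b : R) :
  (fun y => (y - z) / t) @^-1` `]a, b] = `](t * a + z), (t * b + z)].
Proof.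
apply/seteqP; split => y /=; rewrite !in_itv /= ltr_pdivlMr // ler_pdivrMr //;
  by move=> /andP[? ?]; apply/andP; split; lra.
Qed.

Lemma lebesgue_measure_affine_preimage (A : set R) : measurable A ->
  lebesgue_measure ((fun y => (y - z) / t) @^-1` A) =
  (t%:E * lebesgue_measure A)%E.
Proof.
move=> mA; have invt_ge0 : 0 <= t^-1 by rewrite invr_ge0 ltW.
have mphi : @measurable_fun _ _ (measurableTypeR R) (measurableTypeR R) setT
  (fun y => (y - z) / t) := measurable_affine.
pose phi_mu := measure_function_pushforward__canonical__measure_function_Measure
  (@lebesgue_measure R) mphi.
have on_itv X :
    ocitv X -> lebesgue_measure X = mscale (NngNum invt_ge0) phi_mu X.
  move=> [[a b] _ <-].
  rewrite /mscale /= /pushforward affine_preimage_itvoc !lebesgue_measure_itv.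
  rewrite /= !lte_fin ltrD2r ltr_pM2l //.
  case: ifP => _; last by rewrite mule0.
  by rewrite -!EFinD -EFinM; congr EFin; field; exact: lt0r_neq0.
rewrite (lebesgue_measure_unique on_itv mA).
by rewrite /mscale /= muleA -EFinM mulfV ?mul1e // lt0r_neq0.
Qed.

Lemma ge0_integral_affine (G : R -> \bar R) :
  measurable_fun setT G -> (forall y, (0 <= G y)%E) ->
  (\int[@lebesgue_measure R]_(y in [set: R]) G ((y - z) / t)%R =
   t%:E * \int[@lebesgue_measure R]_(y in [set: R]) G y)%E.
Proof.
move=> mG G0.
have mphi : @measurable_fun _ _ (measurableTypeR R) (measurableTypeR R) setT
  (fun y => (y - z) / t) := measurable_affine.
have mG' : @measurable_fun _ _ (measurableTypeR R) _ setT G := mG.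
have := ge0_integral_pushforward mphi lebesgue_measure measurableT mG'
  (fun y _ => G0 y).
rewrite preimage_setT => <-.
rewrite -(ge0_integral_mscale _ measurableT (NngNum (ltW t_gt0)) mG') //.
apply: eq_measure_integral => A mA _ /=.
by rewrite /mscale /= /pushforward lebesgue_measure_affine_preimage.
Qed.

End affine_change_of_variables.

Section tuple_affine.
Variable R : realType.
Variable t : R.
Hypothesis t_gt0 : 0 < t.

Lemma measurable_tuple_affine (d : nat) (z : d.-tuple R) :
  measurable_fun setT
    (fun x : d.-tuple R => [tuple (tnth x i - tnth z i) / t | i < d]).
Proof.
apply/measurable_fun_tnthP => i.
rewrite (_ : _ \o _ = fun x : d.-tuple R => (tnth x i - tnth z i) / t).
  exact: measurableT_comp (measurable_affine _ _) (measurable_tnth i).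
by apply: funext => x /=; rewrite tnth_mktuple.
Qed.

Lemma tuple_affine_cons (d : nat) (y : R) (s : d.-tuple R) (z : d.+1.-tuple R) :
  [tuple (tnth [tuple of y :: s] i - tnth z i) / t | i < d.+1] =
  [tuple of (y - thead z) / t ::
     [tuple (tnth s i - tnth [tuple of behead z] i) / t | i < d]].
Proof.
apply: eq_from_tnth => i; rewrite tnth_mktuple.
case: (unliftP ord0 i) => [j ->|->] //.
by rewrite !tnthS tnth_mktuple {1}(tuple_eta z) tnthS.
Qed.

Lemma iint_affine (d : nat) (z : d.-tuple R) (f : d.-tuple R -> \bar R) :
  measurable_fun setT f -> (forall x, (0 <= f x)%E) ->
  iint (fun x => f [tuple (tnth x i - tnth z i) / t | i < d]) =
  ((t ^+ d)%:E * iint f)%E.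
Proof.
elim: d z f => [|d IH] z f mf f0 /=.
  by rewrite expr0 mul1e; congr f; exact: tuple0.
pose G y := iint (fun s : d.-tuple R => f [tuple of y :: s]).
have inner y : iint (fun s : d.-tuple R =>
    f [tuple (tnth [tuple of y :: s] i - tnth z i) / t | i < d.+1]) =
    ((t ^+ d)%:E * G ((y - thead z) / t)%R)%E.
  under eq_fun do rewrite tuple_affine_cons.
  by apply: IH => //; exact: measurable_fun_cons_section.
under eq_integral do rewrite inner.
have mG : measurable_fun setT G := measurable_iint_cons mf f0.
have G0 y : (0 <= G y)%E by apply: iint_ge0.
rewrite ge0_integralZl //; last 2 first.
- exact: measurableT_comp mG (measurable_affine _ _).
- by rewrite lee_fin exprn_ge0 // ltW.
by rewrite ge0_integral_affine // muleA -EFinM exprSr.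
Qed.

End tuple_affine.

Lemma sqr_convex_comb_le (R : realDomainType) (n : nat) (a v : 'I_n -> R) :
  (forall i, 0 <= a i) -> \sum_i a i = 1 ->
  (\sum_i a i * v i) ^+ 2 <= \sum_i a i * v i ^+ 2.
Proof.
move=> a_ge0 sum_a; set m := \sum_i a i * v i.
have variance_ge0 : 0 <= \sum_i a i * (v i - m) ^+ 2.
  by apply: sumr_ge0 => i _; rewrite mulr_ge0 // sqr_ge0.
suff variance_eq : \sum_i a i * (v i - m) ^+ 2 = \sum_i a i * v i ^+ 2 - m ^+ 2.
  by rewrite -subr_ge0 -variance_eq.
transitivity (\sum_i (a i * v i ^+ 2 - 2 * m * (a i * v i) + m ^+ 2 * a i)).
  by apply: eq_bigr => i _; ring.
by rewrite big_split /= sumrB -!mulr_sumr sum_a -/m; ring.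
Qed.

Lemma abse_lne_le_EFin (R : realType) (x : \bar R) (A : R) :
  (`|lne x| <= A%:E)%E -> exists2 r, 0 < r & x = r%:E /\ `|ln r| <= A.
Proof.
case: x => [r| |] /=; rewrite ?leye_eq //.
case: ifPn => [_|]; rewrite ?leye_eq // -ltNge => r_gt0.
by rewrite abse_EFin lee_fin => ln_r_le; exists r.
Qed.

Lemma abse_lne_sandwich (R : realType) (x : \bar R) (k c e : R) :
  0 < k -> 1 <= c -> 0 < e <= 1 ->
  ((c * e ^+ 2 * k)%:E <= x <= (c * k)%:E)%E ->
  (`|lne x| <= (`|ln k| + ln c + 2 * ln e^-1)%:E)%E.
Proof.
move=> k_gt0 c_ge1 /andP[e_gt0 e_le1].
have c_gt0 : 0 < c := lt_le_trans ltr01 c_ge1.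
have lo_gt0 : 0 < c * e ^+ 2 * k by rewrite !mulr_gt0 // exprn_gt0.
case: x => [r| |]; rewrite ?leye_eq ?leeNy_eq ?andbF //.
rewrite !lee_fin => /andP[lo up].
have r_gt0 : 0 < r := lt_le_trans lo_gt0 lo.
rewrite lne_EFin // abse_EFin lee_fin.
have ln_up : ln r <= ln c + ln k.
  by rewrite -lnM ?posrE // ler_ln ?posrE ?mulr_gt0.
have ln_lo : ln c + ln (e ^+ 2) + ln k <= ln r.
  by rewrite -!lnM ?posrE ?mulr_gt0 ?exprn_gt0 // ler_ln ?posrE.
rewrite lnXn // -mulr_natl in ln_lo.
have ln_c_ge0 : 0 <= ln c := ln_ge0 c_ge1.
have ln_e_le0 : ln e <= 0 := ln_le0 e_le1.
have := ler_norm (ln k); have := ler_norm (- ln k).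
rewrite normrN lnV ?posrE //.
by rewrite ler_norml => ? ?; apply/andP; split; lra.
Qed.

Lemma measurable_EFin_sqr (dT : measure_display) (T : measurableType dT)
    (R : realType) (f : T -> R) :
  measurable_fun setT f -> measurable_fun setT (fun x => (f x ^+ 2)%:E).
Proof. by move=> mf; apply/measurable_EFinP; exact: measurable_funX. Qed.

Local Notation int_sqr f := (iint (fun x => ((f x) ^+ 2)%:E)).

Section mixture.
Variables (R : realType) (d n : nat) (kappa : d.-tuple R -> R) (theta : R).
Variables (a : 'I_n -> R) (Z : 'I_n -> d.-tuple R).
Hypothesis mkappa : measurable_fun setT kappa.
Hypothesis kappa_ge0 : forall x, 0 <= kappa x.
Hypotheses (theta_gt0 : 0 < theta) (a_ge0 : forall i, 0 <= a i).

Let theta_d_inv_ge0 : 0 <= theta ^- d.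
Proof. by rewrite invr_ge0 exprn_ge0 // ltW. Qed.

Let kshift_ge0 (z x : d.-tuple R) : 0 <= kshift kappa theta z x.
Proof. exact: kappa_ge0. Qed.

Lemma measurable_kshift (z : d.-tuple R) :
  measurable_fun setT (kshift kappa theta z).
Proof. exact: measurableT_comp mkappa (measurable_tuple_affine _ _). Qed.

Lemma int_sqr_kshift (z : d.-tuple R) :
  int_sqr (kshift kappa theta z) = ((theta ^+ d)%:E * int_sqr kappa)%E.
Proof.
apply: (iint_affine theta_gt0 z (measurable_EFin_sqr mkappa)) => x.
by rewrite lee_fin sqr_ge0.
Qed.

Lemma measurable_mix_density :
  measurable_fun setT (mix_density kappa theta a Z).
Proof.
apply: measurable_funM; first exact: measurable_cst.
apply: measurable_sum => i; apply: measurable_funM; first exact: measurable_cst.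
exact: measurable_kshift.
Qed.

Let measurable_kshift_sqr (z : d.-tuple R) :
  measurable_fun setT (fun x => (kshift kappa theta z x ^+ 2)%:E).
Proof. apply: measurable_EFin_sqr; exact: measurable_kshift. Qed.

Let measurable_mix_density_sqr :
  measurable_fun setT (fun x => (mix_density kappa theta a Z x ^+ 2)%:E).
Proof. apply: measurable_EFin_sqr; exact: measurable_mix_density. Qed.

Lemma mix_density_sqr_le (x : d.-tuple R) : \sum_i a i = 1 ->
  mix_density kappa theta a Z x ^+ 2 <=
  \sum_i (theta ^- d ^+ 2 * a i) * kshift kappa theta (Z i) x ^+ 2.
Proof.
move=> sum_a; rewrite exprMn.
under [X in _ <= X]eq_bigr do rewrite -mulrA.
by rewrite -mulr_sumr ler_wpM2l ?sqr_ge0 // sqr_convex_comb_le.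
Qed.

Lemma mix_density_ge (j : 'I_n) (x : d.-tuple R) :
  theta ^- d * a j * kshift kappa theta (Z j) x <=
  mix_density kappa theta a Z x.
Proof.
rewrite -mulrA ler_wpM2l // (bigD1 j) //= lerDl.
by apply: sumr_ge0 => i _; rewrite mulr_ge0.
Qed.

Local Open Scope ereal_scope.

Lemma int_sqr_mix_density_le : (\sum_i a i = 1)%R ->
  int_sqr (mix_density kappa theta a Z) <= (theta ^- d)%:E * int_sqr kappa.
Proof.
move=> sum_a.
pose c i := (theta ^- d ^+ 2 * a i)%R.
have c_ge0 i : (0 <= c i)%R by rewrite mulr_ge0 // sqr_ge0.
pose F i x := (c i)%:E * (kshift kappa theta (Z i) x ^+ 2)%:E.
have mF i : measurable_fun setT (F i).
  by apply: measurable_funeM; exact: measurable_kshift_sqr.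
have F0 i x : 0 <= F i x by rewrite mule_ge0 // lee_fin ?sqr_ge0.
apply: (@le_trans _ _ (iint (fun x => \sum_i F i x))).
  apply: ge0_le_iint => [|||x].
  - exact: measurable_mix_density_sqr.
  - exact: emeasurable_sum.
  - by move=> x; rewrite lee_fin sqr_ge0.
  rewrite /F; under eq_bigr do rewrite -EFinM.
  by rewrite sumEFin lee_fin mix_density_sqr_le.
have int_F i : iint (F i) = (c i * theta ^+ d)%:E * int_sqr kappa.
  rewrite iintZl //; last by move=> x; rewrite lee_fin sqr_ge0.
  by rewrite int_sqr_kshift muleA -EFinM.
rewrite iint_sum //; under eq_bigr do rewrite int_F.
rewrite -ge0_sume_distrl ?sumEFin; last first.
  by move=> i _; rewrite lee_fin mulr_ge0 // exprn_ge0 // ltW.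
rewrite (_ : (\sum_i c i * theta ^+ d)%R = theta ^- d) //.
under eq_bigr do rewrite /c mulrAC.
rewrite -mulr_sumr sum_a mulr1 expr2 -mulrA mulVf ?mulr1 //.
by rewrite expf_neq0 // lt0r_neq0.
Qed.

Lemma int_sqr_mix_density_ge (j : 'I_n) (e : R) : (0 <= e <= a j)%R ->
  (theta ^- d * e ^+ 2)%:E * int_sqr kappa <=
  int_sqr (mix_density kappa theta a Z).
Proof.
move=> /andP[e_ge0 e_le_aj].
pose c := (theta ^- d ^+ 2 * e ^+ 2)%R.
have c_ge0 : (0 <= c)%R by rewrite mulr_ge0 // sqr_ge0.
have -> : (theta ^- d * e ^+ 2)%:E * int_sqr kappa =
    c%:E * int_sqr (kshift kappa theta (Z j)).
  rewrite int_sqr_kshift muleA -EFinM; congr (_%:E * _).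
  by rewrite /c; field; rewrite expf_neq0 // lt0r_neq0.
rewrite -iintZl //; last by move=> x; rewrite lee_fin sqr_ge0.
apply: ge0_le_iint => // [|x|x].
- by apply: measurable_funeM; exact: measurable_kshift_sqr.
- by rewrite mule_ge0 // lee_fin sqr_ge0.
have bump_ge0 : (0 <= theta ^- d * e * kshift kappa theta (Z j) x)%R.
  by rewrite !mulr_ge0.
have bump_le : (theta ^- d * e * kshift kappa theta (Z j) x <=
    mix_density kappa theta a Z x)%R.
  apply: le_trans (mix_density_ge j x).
  by rewrite ler_wpM2r // ler_wpM2l.
rewrite -EFinM lee_fin /c -!exprMn ler_sqr ?nnegrE //.
exact: le_trans bump_le.
Qed.

End mixture.

Unset Implicit Arguments.
Set Strict Implicit.
Theorem lemma24 (R : realType) (d n : nat) (kappa : d.-tuple R -> R)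
  (A theta eps : R) (a : 'I_n -> R) (Z : 'I_n -> d.-tuple R) :
  is_density kappa ->
  (`| h2 kappa | <= A%:E)%E ->
  0 < theta < 1 ->
  0 < eps ->
  \sum_(i < n) a i = 1 ->
  (forall i, eps <= a i) ->
  (`| h2 (mix_density kappa theta a Z) |
     <= (A + d%:R * ln (theta^-1) + 2 * ln (eps^-1))%:E)%E.
Proof.
move=> [mkappa [kappa_ge0 _]] h2_kappa /andP[theta_gt0 theta_lt1] eps_gt0.
move=> sum_a eps_le_a.
have a_ge0 i : 0 <= a i := le_trans (ltW eps_gt0) (eps_le_a i).
have [j _] : exists j : 'I_n, true.
  case: n a Z sum_a {eps_le_a a_ge0} => [|n] a Z; last by exists ord0.
  by rewrite big_ord0 => /eqP; rewrite eq_sym oner_eq0.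
have eps_le1 : eps <= 1.
  by rewrite -sum_a (le_trans (eps_le_a j)) // (bigD1 j) //= lerDl sumr_ge0.
rewrite /h2 !abseN in h2_kappa *.
have [k k_gt0 [int_kappa ln_k_le]] := abse_lne_le_EFin h2_kappa.
have up := int_sqr_mix_density_le Z mkappa theta_gt0 a_ge0 sum_a.
have eps_between : 0 <= eps <= a j by rewrite ltW // eps_le_a.
have lo :=
  int_sqr_mix_density_ge Z mkappa kappa_ge0 theta_gt0 a_ge0 eps_between.
rewrite int_kappa -!EFinM in up lo.
have theta_inv_ge1 : 1 <= theta^-1 by rewrite invf_ge1 // ltW.
have c_ge1 : 1 <= theta ^- d by rewrite -exprVn exprn_ege1.
have eps_range : 0 < eps <= 1 by rewrite eps_gt0 eps_le1.
have sandwich : ((theta ^- d * eps ^+ 2 * k)%:E <=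
    int_sqr (mix_density kappa theta a Z) <= (theta ^- d * k)%:E)%E.
  by rewrite lo up.
apply: (le_trans (abse_lne_sandwich k_gt0 c_ge1 eps_range sandwich)).
by rewrite lee_fin -exprVn lnXn ?invr_gt0 // -mulr_natl; lra.
Qed.
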